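(* Let $n\ge p\ge1$, $0<\varepsilon<1$, $\lambda>0$. For every $X\in\mathbb{R}^{n\times p}$ with $\|X^\top X-I_p\|\le\varepsilon$ and every skew-symmetric $A\in\mathbb{R}^{n\times n}$, the field $F(X,A)=AX+\lambda X(X^\top X-I_p)$ satisfies $$\|AX\|^2+4\lambda^2(1-\varepsilon)\mathcal{N}(X)\le\|F(X,A)\|^2\le\|AX\|^2+4\lambda^2(1+\varepsilon)\mathcal{N}(X),$$ where $\mathcal{N}(X)=\frac14\|X^\top X-I_p\|^2$.
   Context: $\|\cdot\|$ denotes the Frobenius norm. Note $\nabla\mathcal{N}(X)=X(X^\top X-I_p)$, so $F(X,A)=AX+\lambda\nabla\mathcal{N}(X)$. *)

From HB Require Import structures.
From mathcomp Require Import all_boot all_order all_algebra.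
Set Implicit Arguments. Unset Strict Implicit. Unset Printing Implicit Defensive.
Import Order.TTheory GRing.Theory Num.Theory.
Local Open Scope ring_scope.

Definition frob (R : rcfType) (m n : nat) (M : 'M[R]_(m, n)) : R :=
  Num.sqrt (\sum_(i < m) \sum_(j < n) M i j ^+ 2).

Definition skew (R : rcfType) (n : nat) (A : 'M[R]_n) : Prop := A^T = - A.

Definition Nfun (R : rcfType) (n p : nat) (X : 'M[R]_(n, p)) : R :=
  4^-1 * frob (X^T *m X - 1%:M) ^+ 2.

Definition Ffield (R : rcfType) (n p : nat) (lambda : R)
  (X : 'M[R]_(n, p)) (A : 'M[R]_n) : 'M[R]_(n, p) :=
  A *m X + lambda *: (X *m (X^T *m X - 1%:M)).

From HB Require Import structures.
From mathcomp Require Import all_boot all_order all_algebra.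
From mathcomp Require Import ring lra.

(* Put S = X^T X - I, which is symmetric, so that F = AX + lambda XS and
   |F|^2 = |AX|^2 + 2 lambda <AX, XS> + lambda^2 |XS|^2.  The cross term vanishes:
   <AX, XS> = - tr ((X^T A X) S) is the trace of a skew-symmetric matrix times a
   symmetric one.  As X^T X = I + S, |XS|^2 = tr (S (I + S) S) = |S|^2 + tr (S^3),
   and Cauchy-Schwarz with submultiplicativity of the Frobenius norm gives
   |tr (S^3)| <= |S|^3 <= eps |S|^2 = 4 eps N(X). *)

Set Implicit Arguments.
Unset Strict Implicit.
Unset Printing Implicit Defensive.

Import Order.TTheory GRing.Theory Num.Theory.
Local Open Scope ring_scope.

Lemma sum_mul_sqr_le (R : realDomainType) (I : finType) (a b : I -> R) :
  (\sum_i a i * b i) ^+ 2 <= (\sum_i a i ^+ 2) * (\sum_i b i ^+ 2).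
Proof.
have lagrange : \sum_i \sum_j (a i * b j - a j * b i) ^+ 2
    = 2 * ((\sum_i a i ^+ 2) * (\sum_i b i ^+ 2) - (\sum_i a i * b i) ^+ 2).
  have expand i j : (a i * b j - a j * b i) ^+ 2
      = a i ^+ 2 * b j ^+ 2 + b i ^+ 2 * a j ^+ 2 - (2 * (a i * b i)) * (a j * b j).
    by ring.
  under eq_bigr do under eq_bigr do rewrite expand.
  under eq_bigr do rewrite sumrB big_split.
  rewrite sumrB big_split /= -!big_distrlr -mulr_sumr /=.
  ring.
have : 0 <= \sum_i \sum_j (a i * b j - a j * b i) ^+ 2.
  by do 2!apply: sumr_ge0 => ? _; exact: sqr_ge0.
by rewrite lagrange pmulr_rge0 // subr_ge0.
Qed.

Lemma mxtrace_trmx_mulE (R : pzSemiRingType) (m n : nat) (M N : 'M[R]_(m, n)) :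
  \tr (M^T *m N) = \sum_i \sum_j M i j * N i j.
Proof.
rewrite /mxtrace exchange_big; apply: eq_bigr => j _.
by rewrite mxE; apply: eq_bigr => i _; rewrite mxE.
Qed.

Section Frobenius.
Variable R : rcfType.

Lemma frob_ge0 (m n : nat) (M : 'M[R]_(m, n)) : 0 <= frob M.
Proof. exact: sqrtr_ge0. Qed.

Lemma frob_sqrE (m n : nat) (M : 'M[R]_(m, n)) :
  frob M ^+ 2 = \sum_i \sum_j M i j ^+ 2.
Proof. by rewrite sqr_sqrtr //; do 2!apply: sumr_ge0 => ? _; exact: sqr_ge0. Qed.

Lemma frob_sqr_mxtrace (m n : nat) (M : 'M[R]_(m, n)) :
  frob M ^+ 2 = \tr (M^T *m M).
Proof.
by rewrite frob_sqrE mxtrace_trmx_mulE; under eq_bigr do under eq_bigr do rewrite expr2.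
Qed.

Lemma mxtrace_trmx_mul_le (m n : nat) (M N : 'M[R]_(m, n)) :
  `|\tr (M^T *m N)| <= frob M * frob N.
Proof.
rewrite -(@ler_pXn2r _ 2) ?nnegrE ?mulr_ge0 ?frob_ge0 //.
rewrite real_normK ?num_real // exprMn !frob_sqrE mxtrace_trmx_mulE !pair_big.
exact: sum_mul_sqr_le.
Qed.

Lemma frob_mulmx_le (m k n : nat) (M : 'M[R]_(m, k)) (N : 'M[R]_(k, n)) :
  frob (M *m N) <= frob M * frob N.
Proof.
rewrite -(@ler_pXn2r _ 2) ?nnegrE ?mulr_ge0 ?frob_ge0 //.
rewrite exprMn !frob_sqrE [X in _ * X]exchange_big big_distrlr /=.
apply: ler_sum => i _; apply: ler_sum => j _.
rewrite mxE; exact: sum_mul_sqr_le.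
Qed.

Lemma frob_sqrD (m n : nat) (M N : 'M[R]_(m, n)) :
  frob (M + N) ^+ 2 = frob M ^+ 2 + 2 * \tr (M^T *m N) + frob N ^+ 2.
Proof.
rewrite !frob_sqr_mxtrace [(M + N)^T]linearD /= mulmxDl !mulmxDr !mxtraceD.
by rewrite -[\tr (N^T *m M)]mxtrace_tr trmx_mul trmxK; ring.
Qed.

Lemma frob_sqrZ (m n : nat) (a : R) (M : 'M[R]_(m, n)) :
  frob (a *: M) ^+ 2 = a ^+ 2 * frob M ^+ 2.
Proof.
rewrite !frob_sqrE mulr_sumr; apply: eq_bigr => i _.
by rewrite mulr_sumr; apply: eq_bigr => j _; rewrite mxE exprMn.
Qed.

End Frobenius.

Lemma mxtrace_skew_mul_sym (R : numDomainType) (n : nat) (K S : 'M[R]_n) :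
  K^T = - K -> S^T = S -> \tr (K *m S) = 0.
Proof.
move=> skewK symS; apply/eqP; rewrite -eqNr; apply/eqP.
by rewrite -{2}mxtrace_tr trmx_mul symS skewK mulmxN linearN /= mxtrace_mulC.
Qed.

Lemma trmx_gram_sub1 (R : comPzRingType) (n p : nat) (X : 'M[R]_(n, p)) :
  (X^T *m X - 1%:M)^T = X^T *m X - 1%:M.
Proof. by rewrite linearB /= trmx_mul trmxK tr_scalar_mx. Qed.

Lemma mxtrace_mulmx_skew_sym_eq0 (R : numDomainType) (n p : nat)
    (A : 'M[R]_n) (X : 'M[R]_(n, p)) (S : 'M[R]_p) :
  A^T = - A -> S^T = S -> \tr ((A *m X)^T *m (X *m S)) = 0.
Proof.
move=> skewA symS; rewrite trmx_mul skewA mulmxN mulNmx linearN /= !mulmxA.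
rewrite (mxtrace_skew_mul_sym _ symS) ?oppr0 //.
by rewrite !trmx_mul trmxK skewA mulNmx mulmxN mulmxA.
Qed.

Lemma frob_mulmx_gram_sub1_sqr (R : rcfType) (n p : nat) (X : 'M[R]_(n, p)) :
  let S := X^T *m X - 1%:M in
  frob (X *m S) ^+ 2 = frob S ^+ 2 + \tr (S^T *m (S *m S)).
Proof.
move=> S; have gramX : X^T *m X = S + 1%:M by rewrite subrK.
rewrite !frob_sqr_mxtrace trmx_mul mulmxA -(mulmxA _ X^T) gramX.
by rewrite mulmxDr mulmx1 mulmxDl linearD /= addrC trmx_gram_sub1 !mulmxA.
Qed.

Lemma mxtrace_trmx_mul_sqr_le (R : rcfType) (n : nat) (S : 'M[R]_n) :
  `|\tr (S^T *m (S *m S))| <= frob S ^+ 3.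
Proof.
apply: (le_trans (mxtrace_trmx_mul_le _ _)).
by rewrite exprS expr2 ler_wpM2l ?frob_ge0 ?frob_mulmx_le.
Qed.

Theorem proposition2 (R : rcfType) (n p : nat) (eps lambda : R)
  (X : 'M[R]_(n, p)) (A : 'M[R]_n) :
  (1 <= p)%N -> (p <= n)%N -> 0 < eps -> eps < 1 -> 0 < lambda ->
  frob (X^T *m X - 1%:M) <= eps -> skew A ->
  frob (A *m X) ^+ 2 + 4 * lambda ^+ 2 * (1 - eps) * Nfun X
    <= frob (Ffield lambda X A) ^+ 2
  /\ frob (Ffield lambda X A) ^+ 2
    <= frob (A *m X) ^+ 2 + 4 * lambda ^+ 2 * (1 + eps) * Nfun X.
Proof.
move=> _ _ _ _ _ S_le skewA; set S := X^T *m X - 1%:M in S_le *.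
have F_sqr : frob (Ffield lambda X A) ^+ 2
    = frob (A *m X) ^+ 2 + lambda ^+ 2 * (frob S ^+ 2 + \tr (S^T *m (S *m S))).
  rewrite /Ffield frob_sqrD -scalemxAr linearZ /= frob_sqrZ.
  rewrite (mxtrace_mulmx_skew_sym_eq0 _ skewA (trmx_gram_sub1 X)).
  by rewrite frob_mulmx_gram_sub1_sqr mulr0 mulr0 addr0.
have /andP[cube_ge cube_le] :
    - (eps * frob S ^+ 2) <= \tr (S^T *m (S *m S)) <= eps * frob S ^+ 2.
  rewrite -ler_norml; apply: (le_trans (mxtrace_trmx_mul_sqr_le S)).
  by rewrite exprS ler_wpM2r ?sqr_ge0.
have lambda_sqr_ge0 := sqr_ge0 lambda.
rewrite F_sqr /Nfun -/S; split; nra.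
Qed.
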